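(* Let $\Phi=\varphi\land\bigwedge RE\land\bigwedge DI$ be an $\mathcal{ALCQIO}_{b,Re}$-formula over $\tau$ with $RE=\{\mathit{Reach}(B_1,S_1,A_1),\dots,\mathit{Reach}(B_h,S_h,A_h)\}$. Let $1\le h'\le h$ and let $\mathcal{M}$ be a $\tau$-structure such that $\mathcal{M}\models\mathit{assoc}(\Phi)$, $\mathcal{M}$ is $\Phi$-semi-connected, and $\mathcal{M}$ has $\ell$-useful labelings $f_\ell$ for all $1\le\ell\le h$. If $\mathit{val}_{f_{h'}}(D^{\mathcal{M}}_{h'})>0$, then there is a tuple $\mathfrak{t}=(a_0,a_1,r)$ with $a_0,a_1\in M$ and $r\in\mathsf{N_F}$ such that: 1. $D^{\mathcal{M}}_\ell=D^{\mathcal{M}\rhd\mathfrak{t}}_\ell$ for all $\ell\ne h'$; 2. $\overline{tp}^{\varphi}_{\mathcal{M}}(u)=\overline{tp}^{\varphi}_{\mathcal{M}\rhd\mathfrak{t}}(u)$ for all $u\in M$; 3. $\mathcal{M}\rhd\mathfrak{t}\models\mathit{assoc}(\Phi)$; 4. $\mathit{val}_{f_{h'}}(D^{\mathcal{M}}_{h'})>\mathit{val}_{f_{h'}}(D^{\mathcal{M}\rhd\mathfrak{t}}_{h'})$; 5. $\mathit{val}_{f_\ell}(D^{\mathcal{M}}_\ell)=\mathit{val}_{f_\ell}(D^{\mathcal{M}\rhd\mathfrak{t}}_\ell)$ for all $\ell\ne h'$; 6. $\mathcal{M}\rhd\mathfrak{t}$ is $\Phi$-semi-connected; 7. $f_\ell$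 is an $\ell$-useful labeling for $\mathcal{M}\rhd\mathfrak{t}$ for all $1\le\ell\le h$.
   Context: Structures are finite; $\tau$ has atomic concepts, atomic roles (a subset $\mathsf{N_F}$ functional, interpreted as partial functions) and nominals. $\mathcal{ALCQIO}_b$: concepts built from atomic concepts and nominals ($o$ denotes $\{o^{\mathcal{M}}\}$) using $\sqcap,\sqcup,\neg,\exists r.C,\exists^{\le n}r.C$ for roles $r$ atomic or inverse $r^-$; formulae are Boolean combinations of inclusions $C\sqsubseteq D$ and equalities $C\equiv D$; standard semantics. A reachability assertion $\mathit{Reach}(B,S,A)$ has atomic concepts $A,B$ and $S\subseteq\mathsf{N_F}$; $\mathit{Disj}(A_1,A_2)$ is $A_1\sqcap A_2\equiv\bot$. $RE,DI$ are compatible if for every two assertions $\mathit{Reach}(B_1,S_1,A_1),\mathit{Reach}(B_2,S_2,A_2)\in RE$ with $S_1\cap S_2\neq\emptyset$, $\mathit{Disj}(A_1,A_2)\in DI$. An $\mathcal{ALCQIO}_{b,Re}$-formula is $\Phi=\varphi\land\bigwedge RE\land\bigwedge DI$ with $\varphi\in\mathcal{ALCQIO}_b$, $RE,DI$ finite and compatible. $\mathit{assoc}(\Phi)=\varphi\land\bigwedge_{\mathit{Reach}(B,S,A)\in RE}(B\sqsubseteq A)\land\bigwedge DI$. $D^{\mathcal{M}}_{\ell}$ is the directed graph on vertex set $A_{\ell}^{\mathcal{M}}$ with edges $\bigcup_{s\in S_{\ell}}s^{\mathcal{M}}\cap(A_{\ell}^{\mathcal{M}}\times A_{\ell}^{\mathcal{M}})$.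 $\mathcal{M}$ is $\Phi$-semi-connected if $\mathcal{M}\models\mathit{assoc}(\Phi)$ and for every $\ell$ and $u\in A_{\ell}^{\mathcal{M}}$, $u$ is reachable in $D^{\mathcal{M}}_{\ell}$ from $B_{\ell}^{\mathcal{M}}$ or from a directed cycle of $D^{\mathcal{M}}_{\ell}$. Types: $\mathrm{Con}(\varphi)$ is the set of concepts occurring in $\varphi$ (including subconcepts), $\mathrm{TYPES}_\varphi$ its power set, $\overline{tp}^{\varphi}_{\mathcal{M}}(u)=\{C\in\mathrm{Con}(\varphi)\mid u\in C^{\mathcal{M}}\}$. An $\ell$-useful labeling for $\mathcal{M}$ is $f_\ell:A_{\ell}^{\mathcal{M}}\to[1,|\mathrm{TYPES}_\varphi|]$ such that (1) $f_\ell(u)=f_\ell(v)$ implies equal types, and (2) for every $u\in A_{\ell}^{\mathcal{M}}$, either $u\in B_{\ell}^{\mathcal{M}}$ or there are $v,w\in A_{\ell}^{\mathcal{M}}$ with $f_\ell(u)=f_\ell(v)$, $f_\ell(w)<f_\ell(v)$ and $(w,v)$ an edge of $D^{\mathcal{M}}_{\ell}$. A base for $D^{\mathcal{M}}_{\ell}$ is a set $X\subseteq A_{\ell}^{\mathcal{M}}$ from which all of $A_{\ell}^{\mathcal{M}}$ is reachable in $D^{\mathcal{M}}_{\ell}$; $\mathit{val}_f(X)=\sum_{x\in X\setminus B_{\ell}^{\mathcal{M}}}f(x)$ and $\mathit{val}_f(D^{\mathcal{M}}_{\ell})$ is the minimum of $\mathit{val}_f(X)$ over all bases $X$. The operation $\rhd$: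 for $\mathfrak{t}=(a_0,a_1,r)$, $\mathcal{M}\rhd\mathfrak{t}$ has the same universe and interpretations as $\mathcal{M}$ except $r^{\mathcal{M}\rhd\mathfrak{t}}=\big(r^{\mathcal{M}}\setminus\{(a_i,b)\mid (a_i,b)\in r^{\mathcal{M}},i\in\{0,1\}\}\big)\cup\{(a_{1-i},b)\mid (a_i,b)\in r^{\mathcal{M}},i\in\{0,1\}\}$. *)

From HB Require Import structures.
From mathcomp Require Import all_boot.

Set Implicit Arguments.
Unset Strict Implicit.
Unset Printing Implicit Defensive.

(* ---------- Syntax of ALCQIO_b over a signature tau ----------
   AC  : atomic concept names
   RN  : atomic role names (N_F : pred RN are the functional ones)
   NOM : nominals *)
Section Syntax.
Variables (AC RN NOM : eqType).

Inductive role := RAt of RN | RInv of RN.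

Definition role_eqb (r s : role) : bool :=
  match r, s with
  | RAt a, RAt b => a == b
  | RInv a, RInv b => a == b
  | _, _ => false
  end.

Lemma role_eqP : Equality.axiom role_eqb.
Proof.
case=> [a|a] [b|b] /=; try by constructor.
- by apply: (iffP eqP) => [->|[]].
- by apply: (iffP eqP) => [->|[]].
Qed.

HB.instance Definition _ := hasDecEq.Build role role_eqP.

Inductive concept :=
  | CAt of AC
  | CNom of NOM
  | CNot of concept
  | CAnd of concept & concept
  | COr of concept & concept
  | CEx of role & concept
  | CAtMost of nat & role & concept.

Fixpoint concept_eqb (C D : concept) : bool :=
  match C, D with
  | CAt a, CAt b => a == b
  | CNom a, CNom b => a == b
  | CNot c, CNot d => concept_eqb c d
  | CAnd c1 c2, CAnd d1 d2 => concept_eqb c1 d1 && concept_eqb c2 d2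
  | COr c1 c2, COr d1 d2 => concept_eqb c1 d1 && concept_eqb c2 d2
  | CEx r c, CEx s d => (r == s) && concept_eqb c d
  | CAtMost n r c, CAtMost m s d => [&& n == m, r == s & concept_eqb c d]
  | _, _ => false
  end.

Lemma concept_eqP : Equality.axiom concept_eqb.
Proof.
elim=> [a|a|c IH|c1 IH1 c2 IH2|c1 IH1 c2 IH2|r c IH|n r c IH]
       [b|b|d|d1 d2|d1 d2|s d|m s d] /=; try by constructor.
- by apply: (iffP eqP) => [->|[]].
- by apply: (iffP eqP) => [->|[]].
- by apply: (iffP (IH d)) => [->|[]].
- apply: (iffP andP) => [[/IH1 -> /IH2 ->]//|[<- <-]].
  by split; [apply/IH1|apply/IH2].
- apply: (iffP andP) => [[/IH1 -> /IH2 ->]//|[<- <-]].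
  by split; [apply/IH1|apply/IH2].
- apply: (iffP andP) => [[/eqP -> /IH ->]//|[<- <-]].
  by split; [|apply/IH].
- apply: (iffP and3P) => [[/eqP -> /eqP -> /IH ->]//|[<- <- <-]].
  by split; [| |apply/IH].
Qed.

HB.instance Definition _ := hasDecEq.Build concept concept_eqP.

Inductive formula :=
  | FIncl of concept & concept
  | FEqv of concept & concept
  | FNot of formula
  | FAnd of formula & formula
  | FOr of formula & formula.

Fixpoint subconcepts (C : concept) : seq concept :=
  C :: match C with
       | CAt _ | CNom _ => [::]
       | CNot c => subconcepts c
       | CAnd c d | COr c d => subconcepts c ++ subconcepts d
       | CEx _ c | CAtMost _ _ c => subconcepts c
       end.

Fixpoint fconcepts (phi : formula) : seq concept :=
  match phi with
  | FIncl C D | FEqv C D => subconcepts C ++ subconcepts D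
  | FNot p => fconcepts p
  | FAnd p q | FOr p q => fconcepts p ++ fconcepts q
  end.

Definition Con (phi : formula) : seq concept := undup (fconcepts phi).

(* |TYPES_phi| = |powerset of Con(phi)| *)
Definition nTYPES (phi : formula) : nat := 2 ^ size (Con phi).

Record reach := Reach { rB : AC; rS : seq RN; rA : AC }.

Definition reach_eqb (x y : reach) : bool :=
  [&& rB x == rB y, rS x == rS y & rA x == rA y].

Lemma reach_eqP : Equality.axiom reach_eqb.
Proof.
case=> [b s a] [b' s' a']; rewrite /reach_eqb /=.
by apply: (iffP and3P) => [[/eqP -> /eqP -> /eqP ->]|[-> -> ->]].
Qed.

HB.instance Definition _ := hasDecEq.Build reach reach_eqP.

(* Phi = phi /\ /\RE /\ /\DI is an ALCQIO_{b,Re}-formula: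
   RE is a (duplicate-free listing of a) finite set of reachability
   assertions with S subset of N_F, DI a list of pairs (A1,A2) standing
   for Disj(A1,A2), and RE, DI compatible. *)
Definition compatible (RE : seq reach) (DI : seq (AC * AC)) : Prop :=
  forall i j : 'I_(size RE), i != j ->
    let r1 := tnth (in_tuple RE) i in
    let r2 := tnth (in_tuple RE) j in
    has (fun s => s \in rS r2) (rS r1) ->
    ((rA r1, rA r2) \in DI) || ((rA r2, rA r1) \in DI).

Definition wf_ALCQIObRe (NF : pred RN) (RE : seq reach) (DI : seq (AC * AC))
  : Prop :=
  [/\ uniq RE, all (fun rho => all NF (rS rho)) RE & compatible RE DI].

End Syntax.

Section Semantics.
Variables (AC RN NOM : eqType) (T : finType).

Record structure := Struct {
  cI : AC -> pred T;
  rI : RN -> rel T;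
  oI : NOM -> T
}.

Definition functional_ok (NF : pred RN) (M : structure) : Prop :=
  forall r, NF r -> forall u v w, rI M r u v -> rI M r u w -> v = w.

Definition roleI (M : structure) (R : role RN) : rel T :=
  match R with
  | RAt r => rI M r
  | RInv r => fun u v => rI M r v u
  end.

Fixpoint sem (M : structure) (C : concept AC RN NOM) : pred T :=
  match C with
  | CAt A => cI M A
  | CNom o => pred1 (oI M o)
  | CNot c => fun u => ~~ sem M c u
  | CAnd c d => fun u => sem M c u && sem M d u
  | COr c d => fun u => sem M c u || sem M d u
  | CEx R c => fun u => [exists v, roleI M R u v && sem M c v]
  | CAtMost n R c => fun u => #|[set v | roleI M R u v && sem M c v]| <= n
  end.

Fixpoint fsat (M : structure) (phi : formula AC RN NOM) : bool :=
  match phi with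
  | FIncl C D => [forall x, sem M C x ==> sem M D x]
  | FEqv C D => [forall x, sem M C x == sem M D x]
  | FNot p => ~~ fsat M p
  | FAnd p q => fsat M p && fsat M q
  | FOr p q => fsat M p || fsat M q
  end.

Definition tp (M : structure) (phi : formula AC RN NOM) (u : T)
  : seq (concept AC RN NOM) :=
  [seq C <- Con phi | sem M C u].

Definition assoc_sat (M : structure) (phi : formula AC RN NOM)
  (RE : seq (reach AC RN)) (DI : seq (AC * AC)) : bool :=
  [&& fsat M phi,
      all (fun rho => [forall x, cI M (rB rho) x ==> cI M (rA rho) x]) RE
    & all (fun p => [forall x, ~~ (cI M p.1 x && cI M p.2 x)]) DI].

Definition Dgraph (M : structure) (rho : reach AC RN)
  : {set T} * {set T * T} :=
  ([set u | cI M (rA rho) u],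
   [set e | [&& cI M (rA rho) e.1, cI M (rA rho) e.2
              & has (fun s => rI M s e.1 e.2) (rS rho)]]).

Definition Dedge (M : structure) (rho : reach AC RN) : rel T :=
  fun u v => (u, v) \in (Dgraph M rho).2.

Definition on_cycle (M : structure) (rho : reach AC RN) (v : T) : bool :=
  [exists w, Dedge M rho v w && connect (Dedge M rho) w v].

Definition semi_connected (M : structure) (phi : formula AC RN NOM)
  (RE : seq (reach AC RN)) (DI : seq (AC * AC)) : Prop :=
  assoc_sat M phi RE DI /\
  forall rho, rho \in RE -> forall u, u \in (Dgraph M rho).1 ->
    (exists x, cI M (rB rho) x /\ connect (Dedge M rho) x u) \/
    (exists v, on_cycle M rho v /\ connect (Dedge M rho) v u).

(* f is a rho-useful labeling for M (only its values on A^M matter) *)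
Definition useful (M : structure) (phi : formula AC RN NOM)
  (rho : reach AC RN) (f : T -> nat) : Prop :=
  forall u, u \in (Dgraph M rho).1 ->
    [/\ 1 <= f u <= nTYPES phi,
        (forall v, v \in (Dgraph M rho).1 -> f u = f v -> tp M phi u = tp M phi v)
      & cI M (rB rho) u \/
        exists v w, [/\ v \in (Dgraph M rho).1, w \in (Dgraph M rho).1,
                        f u = f v, f w < f v & Dedge M rho w v]].

Definition isBase (M : structure) (rho : reach AC RN) (X : {set T}) : bool :=
  (X \subset (Dgraph M rho).1) &&
  [forall u in (Dgraph M rho).1, [exists x in X, connect (Dedge M rho) x u]].

Definition valX (M : structure) (rho : reach AC RN) (f : T -> nat)
  (X : {set T}) : nat :=
  \sum_(x in X :\: [set u | cI M (rB rho) u]) f x.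

(* minimum over all bases; A^M itself is a base, so it serves as the
   neutral element of the min *)
Definition valD (M : structure) (rho : reach AC RN) (f : T -> nat) : nat :=
  \big[minn/valX M rho f (Dgraph M rho).1]_(X : {set T} | isBase M rho X)
     valX M rho f X.

Definition swap_rel (R : rel T) (a0 a1 : T) : rel T :=
  fun x b => (R x b && (x \notin [:: a0; a1]))
             || ((x == a1) && R a0 b) || ((x == a0) && R a1 b).

Definition rhd (M : structure) (a0 a1 : T) (r : RN) : structure :=
  Struct (cI M)
         (fun r' => if r' == r then swap_rel (rI M r) a0 a1 else rI M r')
         (oI M).

End Semantics.

(* Since val_{f_h'} > 0, some vertex of D_h' is not reachable from B_h'.  Among
   these, pick u in a source strongly connected component, with minimal label.
   Usefulness of f_h' gives an edge w -> v with f w < f v = f u, and minimality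
   of f u forces that neither w nor v reaches u.  By semi-connectedness u lies on
   a cycle, leaving u through an r-edge u -> z with r in S_h'.  Swapping the
   r-successors of u and v keeps all types (u and v have the same type) and all
   other graphs D_l (if r is in S_l, then A_l is disjoint from A_h').  In the new
   graph v -> z ~> u, so whatever was reachable from u is now reachable from v,
   hence from w: replacing in a base all vertices reaching u by w yields a base
   of strictly smaller value, while reachability from B or from a cycle and the
   labelling witnesses survive. *)

From mathcomp Require Import all_boot order fingroup perm.

Set Implicit Arguments.
Unset Strict Implicit.
Unset Printing Implicit Defensive.

Section Subconcepts.
Variables (AC RN NOM : eqType).
Implicit Types (C D : concept AC RN NOM) (psi : formula AC RN NOM).

Lemma subconcepts_refl C : C \in subconcepts C.
Proof. by case: C => *; apply: mem_head. Qed.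

Lemma subconcepts_trans C D :
  D \in subconcepts C -> {subset subconcepts D <= subconcepts C}.
Proof.
elim: C => [a|o|c IH|c IHc d IHd|c IHc d IHd|R c IH|n R c IH] /=;
  rewrite inE; try by move=> /eqP ->.
all: case/predU1P => [-> //|]; rewrite ?mem_cat; try case/orP.
all: move=> H x Hx; rewrite inE ?mem_cat.
all: first [by rewrite (IH H x Hx) orbT | by rewrite (IHc H x Hx) orbT
          | by rewrite (IHd H x Hx) !orbT].
Qed.

Lemma fconcepts_closed psi C :
  C \in fconcepts psi -> {subset subconcepts C <= fconcepts psi}.
Proof.
elim: psi => [C1 D1|C1 D1|p IH|p IHp q IHq|p IHp q IHq] //=; rewrite ?mem_cat.
all: case/orP => H x Hx; rewrite mem_cat.
all: first [by rewrite (subconcepts_trans H Hx) ?orbT | by rewrite (IHp H x Hx)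
          | by rewrite (IHq H x Hx) orbT].
Qed.

Lemma Con_closed phi C : C \in Con phi -> {subset subconcepts C <= Con phi}.
Proof. by rewrite !mem_undup => /fconcepts_closed sub x /sub; rewrite mem_undup. Qed.
End Subconcepts.

Section RoleSwap.
Variables (AC RN NOM : eqType) (T : finType).
Implicit Types (M : structure AC RN NOM T) (u v x y : T) (p : {perm T}).

Lemma rI_rhd M u v r s x y :
  rI (rhd M u v r) s x y = rI M s (if s == r then tperm u v x else x) y.
Proof.
rewrite /=; case: eqVneq => [->|] //; rewrite /swap_rel !inE.
case: tpermP => [->|->|/eqP/negbTE-> /eqP/negbTE->];
  rewrite ?eqxx ?orbT ?andbF ?andbT ?orbF //=.
all: by case: (eqVneq u v) => [->|/negbTE uv]; rewrite ?eqxx ?orbb // ?uv ?(eq_sym v u) ?uv ?orbF.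
Qed.

Definition swap_if (b : bool) u v : {perm T} := if b then tperm u v else 1%g.

Lemma swap_if_invariant (P : pred T) b u v x :
  P u = P v -> P (swap_if b u v x) = P x.
Proof. by rewrite /swap_if; case: b; rewrite ?perm1 //; case: tpermP => // ->. Qed.

Lemma roleI_rhd M u v r R x y :
  roleI (rhd M u v r) R x y =
  roleI M R (swap_if (R == RAt r) u v x) (swap_if (R == RInv r) u v y).
Proof.
case: R => s; rewrite [LHS]/roleI rI_rhd /swap_if /=.
  by change (RAt s == RAt r) with (s == r); case: (s == r); rewrite !perm1.
by change (RInv s == RInv r) with (s == r); case: (s == r); rewrite !perm1.
Qed.

Lemma existsb_perm p (P : pred T) : [exists y, P (p y)] = [exists y, P y].
Proof.
apply/existsP/existsP => [[y Py]|[y Py]]; first by exists (p y).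
by exists ((p^-1)%g y); rewrite permKV.
Qed.

Lemma card_set_perm p (P : pred T) : #|[set y | P (p y)]| = #|[set y | P y]|.
Proof.
rewrite -(card_preimset [set y | P y] (@perm_inj _ p)).
by apply: eq_card => y; rewrite !inE.
Qed.

Lemma sem_rhd M u v r C :
  {in subconcepts C, forall D, sem M D u = sem M D v} ->
  sem (rhd M u v r) C =1 sem M C.
Proof.
elim: C => [a|o|c IH|c IHc d IHd|c IHc d IHd|R c IH|n R c IH] Huv x //=.
- by rewrite IH //; apply: sub_in1 Huv => D HD; rewrite /= inE HD orbT.
- by rewrite IHc ?IHd //; apply: sub_in1 Huv => D HD; rewrite /= inE mem_cat HD ?orbT.
- by rewrite IHc ?IHd //; apply: sub_in1 Huv => D HD; rewrite /= inE mem_cat HD ?orbT.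
all: have Hc : {in subconcepts c, forall D, sem M D u = sem M D v}
       by apply: sub_in1 Huv => D HD; rewrite /= inE HD orbT.
all: have Hcq y : sem M c (swap_if (R == RInv r) u v y) = sem M c y
       by apply/swap_if_invariant/Hc/subconcepts_refl.
all: rewrite -[RHS](swap_if_invariant (R == RAt r) x (Huv _ (subconcepts_refl _))) /=.
all: set p := swap_if (R == RAt r) u v; set q := swap_if (R == RInv r) u v.
- rewrite -(existsb_perm q (fun y => roleI M R (p x) y && sem M c y)).
  by apply: eq_existsb => y; rewrite roleI_rhd IH // Hcq.
- rewrite -(card_set_perm q (fun y => roleI M R (p x) y && sem M c y)).
  by congr (_ <= _); apply: eq_card => y; rewrite !inE roleI_rhd IH // Hcq.
Qed.

Lemma sem_eq_of_tp_eq M phi u v :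
  tp M phi u = tp M phi v -> {in Con phi, forall C, sem M C u = sem M C v}.
Proof.
move=> Etp C HC; have := congr1 (fun s => C \in s) Etp.
by rewrite !mem_filter HC !andbT.
Qed.

Lemma tp_rhd M phi u v r :
  tp M phi u = tp M phi v -> tp (rhd M u v r) phi =1 tp M phi.
Proof.
move=> /sem_eq_of_tp_eq Huv x; apply: eq_in_filter => C HC.
exact/sem_rhd/(sub_in1 (Con_closed HC) Huv).
Qed.

Lemma fsat_rhd M u v r psi :
  {in fconcepts psi, forall C, sem M C u = sem M C v} ->
  fsat (rhd M u v r) psi = fsat M psi.
Proof.
elim: psi => [C D|C D|p IH|p IHp q IHq|p IHp q IHq] /= Huv.
1,2: by apply: eq_forallb => x; rewrite !sem_rhd //;
       apply: sub_in1 Huv => E HE; rewrite mem_cat HE ?orbT.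
- by rewrite IH.
all: by rewrite IHp ?IHq //; apply: sub_in1 Huv => E HE; rewrite mem_cat HE ?orbT.
Qed.

Lemma fsat_rhd_tp M phi u v r :
  tp M phi u = tp M phi v -> fsat (rhd M u v r) phi = fsat M phi.
Proof.
move=> /sem_eq_of_tp_eq Huv; apply/fsat_rhd/(sub_in1 _ Huv) => C.
by rewrite mem_undup.
Qed.
End RoleSwap.

Lemma sum_exchange_lt (T : finType) (g : T -> nat) (Y Y' : {set T}) x0 w :
  x0 \in Y -> Y' \subset w |: (Y :\ x0) -> g w < g x0 ->
  \sum_(i in Y') g i < \sum_(i in Y) g i.
Proof.
move=> Yx0 sub gw; rewrite (big_setD1 x0 Yx0) /=.
apply: leq_ltn_trans (_ : _ <= g w + \sum_(i in Y :\ x0) g i) _; last first.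
  by rewrite ltn_add2r.
apply: leq_trans (_ : _ <= \sum_(i in w |: (Y :\ x0)) g i) _.
  by rewrite [X in _ <= X](big_setID Y') /= (setIidPr sub) leq_addr.
have [wY|wY] := boolP (w \in Y :\ x0); last by rewrite big_setU1.
by rewrite (setUidPr (_ : [set w] \subset _)) ?sub1set ?leq_addl.
Qed.

Section Reachability.
Variable T : finType.
Implicit Types (e : rel T) (B : pred T).

Definition in_cycle e c := [exists y, e c y && connect e y c].
Definition reached B e t := [exists b, B b && connect e b t].
Definition rooted B e t := reached B e t || [exists c, in_cycle e c && connect e c t].

Lemma in_cycle_connect e a b c :
  connect e a b -> e b c -> connect e c a -> in_cycle e a.
Proof.
case/connectP => [[|y p] /= Hp ->] bc ca; apply/existsP.
  by exists c; rewrite bc ca.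
case/andP: Hp => ay Hp; exists y; rewrite ay /=.
by apply: connect_trans (connect_trans _ (connect1 bc)) ca; apply/connectP; exists p.
Qed.

Lemma reached_connect B e x t : reached B e x -> connect e x t -> reached B e t.
Proof.
by case/existsP => b /andP[Bb bx] xt; apply/existsP; exists b; rewrite Bb (connect_trans bx xt).
Qed.

Lemma rooted_connect B e x t : rooted B e x -> connect e x t -> rooted B e t.
Proof.
case/orP=> [/reached_connect rx|/existsP[c /andP[cc cx]]] xt; apply/orP.
  by left; apply: rx.
by right; apply/existsP; exists c; rewrite cc (connect_trans cx xt).
Qed.

Lemma in_cycle_rooted B e c : in_cycle e c -> rooted B e c.
Proof. by move=> cc; apply/orP; right; apply/existsP; exists c; rewrite cc connect0. Qed.

Lemma source_in_cycle B e u :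
  rooted B e u -> ~~ reached B e u -> (forall x, connect e x u -> connect e u x) ->
  in_cycle e u.
Proof.
case/orP => [-> //|/existsP[c /andP[/existsP[y /andP[cy yc]] cu]]] _ src.
exact: in_cycle_connect (src c cu) cy (connect_trans yc cu).
Qed.

Lemma exists_min_source e (U : pred T) (g : T -> nat) t0 :
  U t0 -> (forall x t, connect e x t -> U t -> U x) ->
  exists2 u, U u & forall x, connect e x u -> connect e u x /\ g u <= g x.
Proof.
move=> Ut0 Uclosed; pose ancestors t := [set x | connect e x t].
(* A vertex of U with fewest ancestors lies in a source component. *)
have [t1 Ut1 t1min] := arg_minnP (fun t => #|ancestors t|) Ut0.
have t1_source x : connect e x t1 -> connect e t1 x.
  move=> xt1; apply/negPn/negP => nt1x.
  have : #|ancestors x| < #|ancestors t1|.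
    apply: proper_card; apply/properP; split.
      by apply/subsetP => y; rewrite !inE => /connect_trans; apply.
    by exists t1; rewrite !inE ?connect0.
  by rewrite ltnNge t1min // (Uclosed _ _ xt1 Ut1).
have [u ut1 umin] := @arg_minnP _ t1 (connect e ^~ t1) g (connect0 e t1).
exists u; first exact: Uclosed ut1 Ut1.
move=> x xu; have xt1 := connect_trans xu ut1.
by split; [apply: connect_trans ut1 (t1_source x xt1) | apply: umin].
Qed.

Section EdgeSwap.
Variables (e e' : rel T) (u v : T).
Hypothesis edge_swap : forall x y, e x y -> e' x y || e' (tperm u v x) y.

Lemma edge_kept x y : x != u -> x != v -> e x y -> e' x y.
Proof. by move=> xu xv /edge_swap; rewrite tpermD 1?eq_sym // orbb. Qed.

Lemma connect_avoiding x : ~~ connect e v u -> connect e x u -> connect e' x u.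
Proof.
move=> nvu /connectP[p]; elim: p x => [|y p IH] x /=; first by move=> _ ->.
case/andP => xy yp pu; have [->|xu] := eqVneq x u; first exact: connect0.
have xv : x != v.
  by apply: contraNneq nvu => <-; apply/connectP; exists (y :: p); rewrite //= xy.
exact: connect_trans (connect1 (edge_kept xu xv xy)) (IH y yp pu).
Qed.

Hypothesis connect_vu : connect e' v u.

Lemma edge_moved x y : (x == u) || (x == v) -> e x y -> connect e' v y.
Proof.
have from_pair a : (a == u) || (a == v) -> connect e' v a by case/orP => /eqP ->.
move=> xuv /edge_swap/orP[] xy; apply: connect_trans (from_pair _ _) (connect1 xy) => //.
by case/orP: xuv => /eqP ->; rewrite ?tpermL ?tpermR eqxx ?orbT.
Qed.

Lemma connect_swap x t : connect e x t -> connect e' x t || connect e' v t.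
Proof.
case/connectP => p; elim: p x => [|y p IH] x /=; first by move=> _ ->; rewrite connect0.
case/andP => xy yp yt; case/orP: (IH y yp yt) => [{}yt|->]; last by rewrite orbT.
have [xuv|] := boolP ((x == u) || (x == v)).
  by rewrite (connect_trans (edge_moved xuv xy) yt) orbT.
rewrite negb_or => /andP[xu xv].
by rewrite (connect_trans (connect1 (edge_kept xu xv xy)) yt).
Qed.

Lemma rooted_swap B x : rooted B e x -> rooted B e' x || connect e' v x.
Proof.
case/orP=> [/existsP[b /andP[Bb bx]]|/existsP[c /andP[/existsP[y /andP[cy yc]] cx]]].
  case/orP: (connect_swap bx) => [bx'|->]; last by rewrite orbT.
  by rewrite -orbA; apply/orP; left; apply/existsP; exists b; rewrite Bb.
case/orP: (connect_swap cx) => [cx'|->]; last by rewrite orbT.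
have: rooted B e' c || connect e' v c.
  case/orP: (connect_swap yc) => [yc'|->]; last by rewrite orbT.
  have [cuv|] := boolP ((c == u) || (c == v)).
    by rewrite (connect_trans (edge_moved cuv cy) yc') orbT.
  rewrite negb_or => /andP[cu cv]; apply/orP; left; apply: in_cycle_rooted.
  by apply/existsP; exists y; rewrite (edge_kept cu cv cy).
case/orP => [/rooted_connect/(_ cx') -> //|vc].
by rewrite (connect_trans vc cx') orbT.
Qed.

Lemma base_swap (X : {set T}) w x t :
  (forall y, connect e y u -> connect e u y) -> e' w v -> x \in X -> connect e x t ->
  exists2 y, y \in [set y in X | ~~ connect e y u] :|: [set w] & connect e' y t.
Proof.
move=> src wv Xx xt.
have from_v : connect e' v t ->
    exists2 y, y \in [set y in X | ~~ connect e y u] :|: [set w] & connect e' y t.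
  by move=> vt; exists w; [rewrite !inE eqxx orbT | exact: connect_trans (connect1 wv) vt].
have [xu|nxu] := boolP (connect e x u).
  case/orP: (connect_swap (connect_trans (src x xu) xt)) => [ut|]; apply: from_v => //.
  exact: connect_trans connect_vu ut.
case/orP: (connect_swap xt) => [xt'|]; last exact: from_v.
by exists x; rewrite // !inE Xx nxu.
Qed.
End EdgeSwap.
End Reachability.

Section Structures.
Variables (AC RN NOM : eqType) (T : finType).
Implicit Types (M : structure AC RN NOM T) (rho : reach AC RN) (g : T -> nat).

Lemma DedgeE M rho x y :
  Dedge M rho x y =
  [&& cI M (rA rho) x, cI M (rA rho) y & has (fun s => rI M s x y) (rS rho)].
Proof. by rewrite /Dedge inE. Qed.

Lemma Dedge_connect_in M rho x t :
  connect (Dedge M rho) x t -> cI M (rA rho) t -> cI M (rA rho) x.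
Proof.
by case/connectP => [[|y p] /= Hp ->] // _; case/andP: Hp; rewrite DedgeE => /and3P[].
Qed.

Lemma Dedge_congr M1 M2 rho :
  Dgraph M1 rho = Dgraph M2 rho -> Dedge M1 rho = Dedge M2 rho.
Proof. by rewrite /Dedge => ->. Qed.

Lemma Dedge_rhd M rho u v r x y :
  cI M (rA rho) u -> cI M (rA rho) v -> Dedge M rho x y ->
  Dedge (rhd M u v r) rho x y || Dedge (rhd M u v r) rho (tperm u v x) y.
Proof.
rewrite !DedgeE => uA vA /and3P[xA yA /hasP[s sS sxy]].
have [esr|ne] := eqVneq s r; apply/orP; [right|left].
  have -> : cI M (rA rho) (tperm u v x) by case: tpermP => // ->.
  by rewrite yA; apply/hasP; exists s; rewrite // rI_rhd esr eqxx tpermK -esr.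
by rewrite xA yA; apply/hasP; exists s; rewrite // rI_rhd (negbTE ne).
Qed.

Lemma Dgraph_rhd M rho u v r :
  (r \in rS rho -> ~~ cI M (rA rho) u && ~~ cI M (rA rho) v) ->
  Dgraph (rhd M u v r) rho = Dgraph M rho.
Proof.
move=> uvA; congr pair; apply/setP => -[x y].
change (Dedge (rhd M u v r) rho x y = Dedge M rho x y); rewrite !DedgeE.
apply: andb_id2l => xA; apply: andb_id2l => _; apply: eq_in_has => s sS.
rewrite rI_rhd; case: eqP => [esr|//].
move: sS; rewrite esr => /uvA /andP[nuA nvA].
by rewrite tpermD //; [apply: contraNneq nuA => -> | apply: contraNneq nvA => ->].
Qed.

Lemma Dgraph_rhd_compatible M phi RE DI (h l : 'I_(size RE)) u v r :
  compatible RE DI -> assoc_sat M phi RE DI -> l != h ->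
  r \in rS (tnth (in_tuple RE) h) ->
  cI M (rA (tnth (in_tuple RE) h)) u -> cI M (rA (tnth (in_tuple RE) h)) v ->
  Dgraph (rhd M u v r) (tnth (in_tuple RE) l) = Dgraph M (tnth (in_tuple RE) l).
Proof.
set rh := tnth _ h; set rl := tnth _ l.
move=> compat /and3P[_ _ /allP DIok] lh r_h uA vA; apply: Dgraph_rhd => r_l.
have /orP DIhl : ((rA rh, rA rl) \in DI) || ((rA rl, rA rh) \in DI).
  by apply: compat; [rewrite eq_sym | apply/hasP; exists r].
have notA_l x : cI M (rA rh) x -> ~~ cI M (rA rl) x.
  by move=> xh; apply/negP => xl; case: DIhl => /DIok/forallP/(_ x); rewrite /= xh xl.
by rewrite !notA_l.
Qed.

Lemma valD_le M rho g X : isBase M rho X -> valD M rho g <= valX M rho g X.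
Proof. exact: (@Order.TotalTheory.bigmin_le_cond _ nat). Qed.

Lemma isBase_vertices M rho : isBase M rho (Dgraph M rho).1.
Proof.
apply/andP; split=> //; apply/forall_inP => t tA.
by apply/exists_inP; exists t.
Qed.

Lemma valD_gt M rho g n :
  (forall X, isBase M rho X -> n < valX M rho g X) -> n < valD M rho g.
Proof.
move=> nX; apply: (@Order.POrderTheory.lt_bigmin _ nat) => //.
exact/nX/isBase_vertices.
Qed.

Lemma valD_rhd M rho u v r g :
  Dgraph (rhd M u v r) rho = Dgraph M rho -> valD (rhd M u v r) rho g = valD M rho g.
Proof. by move=> E; rewrite /valD /isBase /valX (Dedge_congr E) E. Qed.

Lemma unreached_of_valD_gt0 M rho g :
  0 < valD M rho g ->
  exists2 t, cI M (rA rho) t & ~~ reached (cI M (rB rho)) (Dedge M rho) t.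
Proof.
move=> val_gt0; apply/exists_inP; apply: contraLR val_gt0.
rewrite negb_exists_in => /forall_inP Hreach; rewrite -leqNgt.
set X := [set x | cI M (rA rho) x && cI M (rB rho) x].
have baseX : isBase M rho X.
  apply/andP; split; first by apply/subsetP => x; rewrite !inE => /andP[].
  apply/forall_inP => t; rewrite inE => tA.
  have /existsP[b /andP[Bb bt]] := negbNE (Hreach t tA).
  by apply/exists_inP; exists b; rewrite // inE Bb (Dedge_connect_in bt tA).
apply: leq_trans (valD_le g baseX) _.
rewrite /valX (_ : _ :\: _ = set0) ?big_set0 //.
by apply/setP => x; rewrite !inE; case: (cI M (rB rho) x); rewrite ?andbF.
Qed.

Lemma exists_unreached_source M rho g :
  0 < valD M rho g ->
  exists2 u, cI M (rA rho) u && ~~ reached (cI M (rB rho)) (Dedge M rho) u &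
    forall x, connect (Dedge M rho) x u -> connect (Dedge M rho) u x /\ g u <= g x.
Proof.
move=> /unreached_of_valD_gt0[t0 t0A t0U].
apply: (@exists_min_source _ _ _ g t0); first by rewrite t0A.
move=> x t xt /andP[tA tU]; rewrite (Dedge_connect_in xt tA).
by apply: contra tU => /reached_connect; apply.
Qed.

Lemma semi_connectedP M phi RE DI :
  semi_connected M phi RE DI <->
  assoc_sat M phi RE DI /\
  forall rho, rho \in RE -> forall t, cI M (rA rho) t ->
    rooted (cI M (rB rho)) (Dedge M rho) t.
Proof.
split=> -[assoc Hr]; split=> // rho rhoRE t tA.
  have tD : t \in (Dgraph M rho).1 by rewrite inE.
  case: (Hr rho rhoRE t tD) => [[b [Bb bt]]|[c [cc ct]]]; apply/orP.
    by left; apply/existsP; exists b; apply/andP.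
  by right; apply/existsP; exists c; apply/andP.
move: tA; rewrite inE => /(Hr rho rhoRE)/orP[]/existsP[b /andP[Bb bt]].
  by left; exists b.
by right; exists b.
Qed.

Lemma useful_rhd M phi rho (f : T -> nat) u v r :
  tp (rhd M u v r) phi =1 tp M phi ->
  (forall x y, Dedge M rho x y ->
     exists2 x', f x' = f x & Dedge (rhd M u v r) rho x' y) ->
  useful M phi rho f -> useful (rhd M u v r) phi rho f.
Proof.
move=> Etp Hedge Huse t tA; have [fbound ftp wit] := Huse t tA.
split=> // [x xA fx|]; first by rewrite !Etp; apply: ftp.
case: wit => [Bt|[v1 [w1 [v1A w1A fv1 fw1 /Hedge[w2 fw2 ew2v1]]]]]; first by left.
right; exists v1, w2; split; rewrite ?fw2 //.
by move: ew2v1; rewrite DedgeE inE => /andP[].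
Qed.

Lemma useful_rhd_swap M phi rho (f : T -> nat) u v r :
  cI M (rA rho) u -> cI M (rA rho) v -> f u = f v -> tp M phi u = tp M phi v ->
  useful M phi rho f -> useful (rhd M u v r) phi rho f.
Proof.
move=> uA vA fuv tpuv; apply: useful_rhd (tp_rhd r tpuv) _ => x y /(Dedge_rhd r uA vA).
case/orP => e'xy; [exists x | exists (tperm u v x)] => //.
by case: tpermP => // ->.
Qed.

Lemma useful_rhd_same M phi rho (f : T -> nat) u v r :
  Dgraph (rhd M u v r) rho = Dgraph M rho -> tp M phi u = tp M phi v ->
  useful M phi rho f -> useful (rhd M u v r) phi rho f.
Proof.
move=> E tpuv; apply: useful_rhd (tp_rhd r tpuv) _ => x y exy.
by exists x; rewrite // (Dedge_congr E).
Qed.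
End Structures.

Section Descent.
Variables (AC RN NOM : eqType) (T : finType) (M : structure AC RN NOM T).
Variables (rho : reach AC RN) (g : T -> nat) (u v w z : T) (r : RN).
Local Notation A := (cI M (rA rho)).
Local Notation B := (cI M (rB rho)).
Local Notation e := (Dedge M rho).
Local Notation e' := (Dedge (rhd M u v r) rho).

Hypothesis u_source : forall x, connect e x u -> connect e u x /\ g u <= g x.
Hypotheses (uA : A u) (u_unreached : ~~ reached B e u).
Hypotheses (g_uv : g u = g v) (g_wv : g w < g v) (e_wv : e w v).
Hypotheses (r_rho : r \in rS rho) (r_uz : rI M r u z) (zu : connect e z u).

Let not_connect_wu : ~~ connect e w u.
Proof. by apply/negP => /u_source[_]; rewrite leqNgt g_uv g_wv. Qed.

Let vA : A v.
Proof. by move: e_wv; rewrite DedgeE => /and3P[]. Qed.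

Let edge_swap x y : e x y -> e' x y || e' (tperm u v x) y :=
  Dedge_rhd (x := x) (y := y) r uA vA.

Let connect_vu_rhd : connect e' v u.
Proof.
have not_connect_vu : ~~ connect e v u.
  by apply: contra not_connect_wu; apply: connect_trans (connect1 e_wv).
have vz : e' v z.
  rewrite DedgeE vA (Dedge_connect_in zu uA).
  by apply/hasP; exists r; rewrite // rI_rhd eqxx tpermR.
exact: connect_trans (connect1 vz) (connect_avoiding edge_swap not_connect_vu zu).
Qed.

Let edge_wv_rhd : e' w v.
Proof.
apply: (edge_kept edge_swap) e_wv; last by apply: contraTneq g_wv => ->; rewrite ltnn.
by apply: contraNneq not_connect_wu => ->; apply: connect0.
Qed.

Lemma valD_rhd_lt : valD (rhd M u v r) rho g < valD M rho g.
Proof.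
apply: valD_gt => X /andP[/subsetP XA /forall_inP Xbase].
have uD : u \in (Dgraph M rho).1 by rewrite inE.
have [x0 Xx0 x0u] := exists_inP (Xbase u uD).
set X' := [set y in X | ~~ connect e y u] :|: [set w].
have baseX' : isBase (rhd M u v r) rho X'.
  apply/andP; split.
    have wA : A w by move: e_wv; rewrite DedgeE => /andP[].
    apply/subsetP => y; rewrite !inE => /orP[/andP[/XA + _] | /eqP -> //].
    by rewrite inE.
  apply/forall_inP => t /Xbase/exists_inP[x Xx xt].
  have [y X'y yt] := base_swap edge_swap connect_vu_rhd
    (fun y yu => (u_source yu).1) edge_wv_rhd Xx xt.
  by apply/exists_inP; exists y.
apply: leq_ltn_trans (valD_le g baseX') _.
have x0B : ~~ B x0.
  by apply: contra u_unreached => Bx0; apply/existsP; exists x0; rewrite Bx0.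
apply: (sum_exchange_lt (x0 := x0) (w := w)).
- by rewrite !inE x0B.
- apply/subsetP => y; rewrite !inE => /andP[nBy /orP[/andP[Xy nyu] | -> //]].
  have yx0 : y != x0 by apply: contraNneq nyu => ->.
  by rewrite yx0 nBy Xy orbT.
- by rewrite (leq_trans g_wv) // -g_uv; case: (u_source x0u).
Qed.

Lemma rooted_rhd :
  (forall t, A t -> rooted B e t) -> forall t, A t -> rooted B e' t.
Proof.
move=> rootedA t tA; have rv : rooted B e' v.
  have wA : A w by move: e_wv; rewrite DedgeE => /andP[].
  case/orP: (rooted_swap edge_swap connect_vu_rhd (rootedA w wA)) => [rw'|vw].
    exact: rooted_connect rw' (connect1 edge_wv_rhd).
  exact/in_cycle_rooted/(in_cycle_connect vw edge_wv_rhd (connect0 _ _)).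
by case/orP: (rooted_swap edge_swap connect_vu_rhd (rootedA t tA)) => // /(rooted_connect rv).
Qed.
End Descent.

Theorem lemma7 (AC RN NOM : eqType) (NF : pred RN) (T : finType)
  (phi : formula AC RN NOM) (RE : seq (reach AC RN)) (DI : seq (AC * AC))
  (M : structure AC RN NOM T) (f : 'I_(size RE) -> T -> nat)
  (h' : 'I_(size RE)) :
  wf_ALCQIObRe NF RE DI ->
  functional_ok NF M ->
  assoc_sat M phi RE DI ->
  semi_connected M phi RE DI ->
  (forall l : 'I_(size RE), useful M phi (tnth (in_tuple RE) l) (f l)) ->
  0 < valD M (tnth (in_tuple RE) h') (f h') ->
  exists (a0 a1 : T) (r : RN), NF r /\
    let M' := rhd M a0 a1 r in
    (forall l : 'I_(size RE), l != h' ->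
       Dgraph M (tnth (in_tuple RE) l) = Dgraph M' (tnth (in_tuple RE) l)) /\
    (forall u : T, tp M phi u = tp M' phi u) /\
    assoc_sat M' phi RE DI /\
    valD M (tnth (in_tuple RE) h') (f h') > valD M' (tnth (in_tuple RE) h') (f h') /\
    (forall l : 'I_(size RE), l != h' ->
       valD M (tnth (in_tuple RE) l) (f l) = valD M' (tnth (in_tuple RE) l) (f l)) /\
    semi_connected M' phi RE DI /\
    (forall l : 'I_(size RE), useful M' phi (tnth (in_tuple RE) l) (f l)).
Proof.
move=> [_ NF_RE compat] _ assoc /semi_connectedP[_ rooted_M] useful_f val_gt0.
have RE_tnth l : tnth (in_tuple RE) l \in RE := mem_tnth l _.
set rho := tnth _ h'; have rhoRE := RE_tnth h'.
have [u /andP[uA uU] u_source] := exists_unreached_source val_gt0.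
have uD : u \in (Dgraph M rho).1 by rewrite inE.
have [_ tp_f [uB|[v [w [vD wD f_uv f_wv e_wv]]]]] := useful_f h' u uD.
  by case/negP: uU; apply/existsP; exists u; rewrite uB connect0.
have /existsP[z /andP[+ zu]] :=
  source_in_cycle (rooted_M rho rhoRE u uA) uU (fun x xu => (u_source x xu).1).
rewrite DedgeE => /and3P[_ _ /hasP[r r_rho r_uz]].
have vA : cI M (rA rho) v by rewrite inE in vD.
have tp_uv : tp M phi u = tp M phi v := tp_f v vD f_uv.
have graph_other l : l != h' ->
    Dgraph (rhd M u v r) (tnth (in_tuple RE) l) = Dgraph M (tnth (in_tuple RE) l).
  by move=> lh; apply: Dgraph_rhd_compatible compat assoc lh r_rho uA vA.
have assoc' : assoc_sat (rhd M u v r) phi RE DI by rewrite /assoc_sat fsat_rhd_tp.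
exists u, v, r; split; first exact: (allP (allP NF_RE rho rhoRE)).
split; first by move=> l /graph_other ->.
split; first by move=> x; rewrite tp_rhd.
split=> //.
split; first exact: valD_rhd_lt u_source uA uU f_uv f_wv e_wv r_rho r_uz zu.
split; first by move=> l /graph_other /valD_rhd ->.
split=> [|l].
- apply/semi_connectedP; split=> // _ /(tnthP (in_tuple RE))[l ->].
  have [->|/graph_other E] := eqVneq l h'.
    exact: rooted_rhd u_source uA f_uv f_wv e_wv r_rho r_uz zu (rooted_M _ rhoRE).
  by rewrite (Dedge_congr E); apply: rooted_M (RE_tnth l).
- have [->|/graph_other E] := eqVneq l h'.
    exact: useful_rhd_swap uA vA f_uv tp_uv (useful_f h').
  exact: useful_rhd_same E tp_uv (useful_f l).
Qed.
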